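(* Let $Q$ be a commutative automorphic loop of nilpotency class $3$. Then for every $a,b,c\in Q$ and every $n\in\mathbb Z$: \begin{align*} (a^n,b,c)&=(a,b,c)^n((a,b,c),a,a)^{\alpha(n)}((a,b,c),a,b)^{\beta(n)}((a,b,c),a,c)^{\beta(n)},\\ (a,b^n,c)&=(a,b,c)^n((a,b,c),b,b)^{\alpha(n)}((a,b,c),b,a)^{\beta(n)}((a,b,c),b,c)^{\beta(n)},\\ (a,b,c^n)&=(a,b,c)^n((a,b,c),c,c)^{\alpha(n)}((a,b,c),c,a)^{\beta(n)}((a,b,c),c,b)^{\beta(n)}, \end{align*} where $\alpha(n)=(n^3-n)/3$ and $\beta(n)=n^2-n$.
   Context: A loop is a set with a binary operation such that all left and right translations $L_a:b\mapsto ab$, $R_a:b\mapsto ba$ are bijections and there is a two-sided identity $1$. The inner mapping group is the stabilizer of $1$ in the group generated by all translations; $Q$ is automorphic if all inner mappings are automorphisms. Automorphic loops are power-associative (each element generates a group), so $a^n$ is well defined for $n\in\mathbb Z$. The associator $(a,b,c)$ is defined by $(ab)c=(a(bc))(a,b,c)$. The center $Z(Q)$ is the set of elements fixed by all inner mappings; $Z_0=1$, $Z_{i+1}(Q)$ is the preimage of $Z(Q/Z_i(Q))$, and $Q$ has nilpotency class $n$ if $Z_{n-1}(Q)\neq Q=Z_n(Q)$. *)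

From mathcomp Require Import all_boot all_algebra.
Set Implicit Arguments. Unset Strict Implicit. Unset Printing Implicit Defensive.
Import GRing.Theory Num.Theory.

(* A loop, given equationally: the left/right divisions are the inverses of
   the left/right translations L_a : b |-> a b and R_a : b |-> b a, so that
   all translations are bijections; [lone] is a two-sided identity. *)
Record loop := Loop {
  lsort :> Type;
  lmul : lsort -> lsort -> lsort;
  lldiv : lsort -> lsort -> lsort;   (* a \ b, i.e. L_a^{-1} b *)
  lrdiv : lsort -> lsort -> lsort;   (* b / a, i.e. R_a^{-1} b *)
  lone : lsort;
  lmulKl : forall a b, lmul a (lldiv a b) = b;
  lldivK : forall a b, lldiv a (lmul a b) = b;
  lmulKr : forall a b, lmul (lrdiv b a) a = b;
  lrdivK : forall a b, lrdiv (lmul b a) a = b;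
  lmul1l : forall a, lmul lone a = a;
  lmul1r : forall a, lmul a lone = a
}.

Section LoopDefs.
Variable Q : loop.
Local Notation "x * y" := (lmul x y).
Local Notation "1" := (lone Q).

Definition Ltr (a : Q) : Q -> Q := fun b => a * b.
Definition Rtr (a : Q) : Q -> Q := fun b => b * a.

Inductive mlt : (Q -> Q) -> Prop :=
| mlt_id : mlt id
| mlt_L f a : mlt f -> mlt (Ltr a \o f)
| mlt_R f a : mlt f -> mlt (Rtr a \o f)
| mlt_Li f a : mlt f -> mlt ((fun b => lldiv a b) \o f)
| mlt_Ri f a : mlt f -> mlt ((fun b => lrdiv b a) \o f).

Definition inner (phi : Q -> Q) : Prop := mlt phi /\ phi 1 = 1.

Definition commutative_loop : Prop := forall x y : Q, x * y = y * x.

Definition automorphic : Prop :=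
  forall phi, inner phi ->
    bijective phi /\ forall x y : Q, phi (x * y) = phi x * phi y.

(* Z_{i+1} is the preimage of Z(Q/Z_i),
   where the center is the set of elements fixed by all inner mappings.
   Working with representatives: the elements of Mlt(Q/Z_i) are exactly the
   maps induced by the elements phi of Mlt(Q), such a map is an inner mapping
   of Q/Z_i iff phi 1 lies in the coset 1 Z_i = Z_i, and it fixes the coset
   x Z_i iff phi x lies in x Z_i. *)
Fixpoint zcenter (i : nat) : Q -> Prop :=
  match i with
  | 0 => fun x => x = 1
  | i'.+1 => fun x =>
      forall phi, mlt phi -> zcenter i' (phi 1) ->
        exists2 z, zcenter i' z & phi x = x * z
  end.

Definition center (x : Q) : Prop := zcenter 1 x.

Definition nilpotency_class (n : nat) : Prop :=
  (exists x : Q, ~ zcenter n.-1 x) /\ (forall x : Q, zcenter n x).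

(* Powers: a^k = a^(k-1) a for k >= 0 (well defined by power-associativity),
   a^(-k) = (a^k)^{-1}, with x^{-1} = x \ 1 (two-sided in a commutative loop). *)
Fixpoint npow (a : Q) (k : nat) : Q :=
  match k with 0 => 1 | k'.+1 => npow a k' * a end.

Definition linv (a : Q) : Q := lldiv a 1.

Definition zpow (a : Q) (n : int) : Q :=
  match n with
  | Posz k => npow a k
  | Negz k => linv (npow a k.+1)
  end.

(* Associator: (ab)c = (a(bc)) (a,b,c). *)
Definition assoc (a b c : Q) : Q := lldiv (a * (b * c)) ((a * b) * c).

End LoopDefs.

Definition alpha (n : int) : int := ((n ^+ 3 - n) %/ 3)%Z.
Definition beta (n : int) : int := n ^+ 2 - n.

From HB Require Import structures.
From mathcomp Require Import all_boot all_algebra.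
From mathcomp Require Import boolp.
From mathcomp.algebra_tactics Require Import ring.
Set Implicit Arguments. Unset Strict Implicit. Unset Printing Implicit Defensive.
Import GRing.Theory.

(* Write Z and Z_2 for the first two centers of Q.  As inner mappings are
   automorphisms, for u in Z_2 the associator (u,x,y) is central and additive
   in each of u, x and y; in class 3, eps(x) = x \ phi(x) lies in Z_2 for every
   inner mapping phi.  Each of (a^n,b,c), (a,b^n,c), (a,b,c^n) has the form
   (s v^n) \ (s phi(v^n)) for an inner mapping phi, with v = a, L_{a,c} b or
   L_{a,b} c, and this equals eps(v^n) (eps(v^n), v^n, s).  Induction gives
   eps(v^n) = eps(v)^n (eps(v),v,v)^alpha(n), and trilinearity turns
   (eps(v^n), v^n, s) into the n^2-th power of (eps(v), v, s); the exponent
   n^2 = n + beta(n) is then split between A^n and the beta(n)-th powers. *)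

Local Notation "x ** y" := (lmul x y) (at level 40, left associativity).

Section Loop.
Variable Q : loop.
Implicit Types (x y z t : Q) (phi : Q -> Q).

Lemma lmulI x y z : x ** y = x ** z -> y = z.
Proof. by move=> e; rewrite -(lldivK x y) e lldivK. Qed.

Lemma lldivv x : lldiv x x = lone Q.
Proof. by rewrite -{2}(lmul1r x) lldivK. Qed.

Lemma linvP x : x ** linv x = lone Q.
Proof. exact: lmulKl. Qed.

Lemma linv_uniq x y : x ** y = lone Q -> y = linv x.
Proof. by move=> e; rewrite /linv -e lldivK. Qed.

Definition Lmap x y : Q -> Q := fun t => lldiv (x ** y) (x ** (y ** t)).

Lemma LmapE x y t : (x ** y) ** Lmap x y t = x ** (y ** t).
Proof. exact: lmulKl. Qed.

Lemma inner_Lmap x y : inner (Lmap x y).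
Proof.
split; first exact: mlt_Li (mlt_L x (mlt_L y (mlt_id Q))).
by rewrite /Lmap lmul1r lldivv.
Qed.

Definition Lmap_inv x y : Q -> Q := fun t => lldiv y (lldiv x ((x ** y) ** t)).

Lemma Lmap_invK x y t : Lmap_inv x y (Lmap x y t) = t.
Proof. by rewrite /Lmap_inv LmapE !lldivK. Qed.

Lemma inner_Lmap_inv x y : inner (Lmap_inv x y).
Proof.
split; first exact: mlt_Li y (mlt_Li x (mlt_L (x ** y) (mlt_id Q))).
by rewrite /Lmap_inv lmul1r lldivK lldivv.
Qed.

Lemma inner_Lmap_conj x y : inner (Lmap y x \o Lmap_inv x y).
Proof.
split.
  exact: mlt_Li (y ** x) (mlt_L y (mlt_L x (mlt_Li y (mlt_Li x (mlt_L (x ** y) (mlt_id Q)))))).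
by rewrite /= (inner_Lmap_inv x y).2 (inner_Lmap y x).2.
Qed.

Definition central z := forall phi, inner phi -> phi z = z.

Lemma central_mulA z x y : central z -> x ** (y ** z) = (x ** y) ** z.
Proof. by move/(_ _ (inner_Lmap x y)) => e; rewrite -LmapE e. Qed.

Definition eps phi y := lldiv y (phi y).

Lemma epsK phi y : phi y = y ** eps phi y.
Proof. by rewrite lmulKl. Qed.

(* [central2 u] says that u Z(Q) is central in Q / Z(Q), i.e. u lies in Z_2(Q). *)
Definition central2 u := forall phi, inner phi -> central (eps phi u).

Lemma zcenter1_one : zcenter 1 (lone Q).
Proof. by move=> phi _ e; exists (lone Q) => //; rewrite e lmul1r. Qed.

Lemma zcenter2_one : zcenter 2 (lone Q).
Proof. by move=> phi _ Zphi1; exists (phi (lone Q)); rewrite ?lmul1l. Qed.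

Lemma zcenter1_central z : zcenter 1 z -> central z.
Proof. by move=> zZ phi [mphi phi1]; case: (zZ phi mphi phi1) => _ -> ->; rewrite lmul1r. Qed.

Lemma zcenter2_central2 u : zcenter 2 u -> central2 u.
Proof.
move=> Zu phi [mphi phi1]; case: (Zu phi mphi); first by rewrite phi1; exact: zcenter1_one.
by move=> z Zz phiu; rewrite /eps phiu lldivK; exact: zcenter1_central.
Qed.

Definition eps_at phi s y := lldiv (s ** y) (s ** phi y).

Lemma assoc_eps_at3 x y z : assoc x y z = eps_at (Lmap_inv x y) (x ** y) (Lmap x y z).
Proof. by rewrite /eps_at Lmap_invK LmapE. Qed.

End Loop.

Fixpoint alpha_nat m := if m is m'.+1 then (alpha_nat m' + m' * m)%N else 0%N.

Local Open Scope ring_scope.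

Lemma alpha_natE m : (alpha_nat m)%:Z * 3 = m%:Z ^+ 3 - m%:Z.
Proof. by elim: m => [|m IHm] //; rewrite /= PoszD PoszM mulrDl IHm intS; ring. Qed.

Lemma alpha_Posz (m : nat) : alpha m = alpha_nat m.
Proof. by rewrite /alpha -alpha_natE mulzK. Qed.

Lemma alpha_Negz m : alpha (Negz m) = - (alpha_nat m.+1)%:Z.
Proof.
rewrite /alpha NegzE.
have -> : (- m.+1%:Z) ^+ 3 - - m.+1%:Z = - (alpha_nat m.+1)%:Z * 3.
  by rewrite mulNr alpha_natE; ring.
by rewrite mulzK.
Qed.

Section CommutativeAutomorphic.
Variable Q : loop.
Hypothesis mulC : commutative_loop Q.
Hypothesis autQ : automorphic Q.
Implicit Types (x y z u v : Q) (phi : Q -> Q).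
Local Hint Resolve inner_Lmap : core.

Lemma innerM phi x y : inner phi -> phi (x ** y) = phi x ** phi y.
Proof. by move/autQ=> []. Qed.

Lemma innerV phi x y : inner phi -> phi (lldiv x y) = lldiv (phi x) (phi y).
Proof. by move=> iphi; apply: (@lmulI _ (phi x)); rewrite -(innerM _ _ iphi) !lmulKl. Qed.

Lemma inner_linv phi x : inner phi -> phi (linv x) = linv (phi x).
Proof. by move=> iphi; rewrite /linv innerV // iphi.2. Qed.

Lemma inner_npow phi x m : inner phi -> phi (npow x m) = npow (phi x) m.
Proof. by move=> iphi; elim: m => [|m IHm] /=; [exact: iphi.2 | rewrite innerM // IHm]. Qed.

Lemma inner_zpow phi x n : inner phi -> phi (zpow x n) = zpow (phi x) n.
Proof.
by move=> iphi; case: n => m; rewrite /zpow; [|rewrite inner_linv //]; rewrite inner_npow.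
Qed.

Lemma central1 : central (lone Q).
Proof. by move=> phi []. Qed.

Lemma centralM x y : central x -> central y -> central (x ** y).
Proof. by move=> Zx Zy phi iphi; rewrite innerM // Zx // Zy. Qed.

Lemma centralV x : central x -> central (linv x).
Proof. by move=> Zx phi iphi; rewrite inner_linv // Zx. Qed.

Lemma central_mulAC z x y : central z -> (x ** z) ** y = (x ** y) ** z.
Proof. by move=> Zz; rewrite mulC (mulC x y) -central_mulA // (mulC z). Qed.

Lemma central_mulACA z z' x y : central z -> central z' ->
  (x ** z) ** (y ** z') = (x ** y) ** (z ** z').
Proof.
move=> Zz Zz'; rewrite (central_mulA (x ** z) y Zz') (central_mulAC x y Zz).
by rewrite -(central_mulA (x ** y) z Zz').
Qed.

Lemma central_linvM z y : central z -> linv (y ** z) = linv y ** linv z.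
Proof.
move=> Zz; apply/esym/linv_uniq.
by rewrite (central_mulACA y (linv y) Zz (centralV Zz)) !linvP lmul1r.
Qed.

Record Zl := ZL { zval :> Q; zvalP : central zval }.
Local Hint Resolve zvalP : core.
HB.instance Definition _ := gen_eqMixin Zl.
HB.instance Definition _ := gen_choiceMixin Zl.

Lemma zval_inj : injective zval.
Proof.
by case=> [a Za] [b Zb] /= eab; subst b; congr ZL; exact: Prop_irrelevance.
Qed.

Definition zadd (a b : Zl) := ZL (centralM (zvalP a) (zvalP b)).
Definition zopp (a : Zl) := ZL (centralV (zvalP a)).
Definition zzero := ZL central1.

Lemma zaddA : associative zadd.
Proof. by move=> a b c; apply: zval_inj; rewrite /= central_mulA. Qed.
Lemma zaddC : commutative zadd.
Proof. by move=> a b; apply: zval_inj; rewrite /= mulC. Qed.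
Lemma zadd0 : left_id zzero zadd.
Proof. by move=> a; apply: zval_inj; rewrite /= lmul1l. Qed.
Lemma zaddN : left_inverse zzero zopp zadd.
Proof. by move=> a; apply: zval_inj; rewrite /= mulC linvP. Qed.
HB.instance Definition _ := GRing.isZmodule.Build Zl zaddA zaddC zadd0 zaddN.

Lemma zvalD (a b : Zl) : zval (a + b) = zval a ** zval b. Proof. by []. Qed.
Lemma zvalN (a : Zl) : zval (- a) = linv (zval a). Proof. by []. Qed.

Lemma mulzA x (a b : Zl) : (x ** zval a) ** zval b = x ** zval (a + b).
Proof. by rewrite zvalD central_mulA. Qed.

Lemma npow_zval (a : Zl) m : npow (zval a) m = zval (a *+ m).
Proof. by elim: m => [|m IHm] //=; rewrite IHm mulrS zvalD mulC. Qed.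

Lemma zpow_zval (a : Zl) n : zpow (zval a) n = zval (a *~ n).
Proof. by case: n => m; rewrite /zpow npow_zval. Qed.

Lemma npow_mulz x (a : Zl) m : npow (x ** zval a) m = npow x m ** zval (a *+ m).
Proof.
elim: m => [|m IHm] /=; first by rewrite lmul1r.
by rewrite IHm central_mulACA // mulrSr.
Qed.

Lemma zpow_mulz x (a : Zl) n : zpow (x ** zval a) n = zpow x n ** zval (a *~ n).
Proof.
case: n => m; rewrite /zpow npow_mulz; first by rewrite -pmulrn.
by rewrite central_linvM.
Qed.

Definition toZl x : Zl :=
  if pselect (central x) is left Zx then ZL Zx else 0.

Lemma toZlK x : central x -> zval (toZl x) = x.
Proof. by rewrite /toZl; case: pselect. Qed.

Lemma toZl1 : toZl (lone Q) = 0.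
Proof. by apply: zval_inj; rewrite toZlK //; exact: central1. Qed.

Lemma toZlM x y : central x -> central y -> toZl (x ** y) = toZl x + toZl y.
Proof. by move=> Zx Zy; apply: zval_inj; rewrite zvalD !toZlK //; exact: centralM. Qed.

Lemma toZlV x : central x -> toZl (linv x) = - toZl x.
Proof. by move=> Zx; apply: zval_inj; rewrite zvalN !toZlK //; exact: centralV. Qed.

Lemma mulzI x (a b : Zl) : x ** a = x ** b -> a = b.
Proof. by move/lmulI/zval_inj. Qed.

Lemma mulzNK x (a : Zl) : (x ** a) ** zval (- a) = x.
Proof. by rewrite mulzA addrN lmul1r. Qed.

Lemma eps_central phi z : inner phi -> central z -> eps phi z = lone Q.
Proof. by move=> iphi Zz; rewrite /eps Zz // lldivv. Qed.

Lemma eps_mul_central phi u v : inner phi ->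
    central (eps phi u) -> central (eps phi v) ->
  eps phi (u ** v) = eps phi u ** eps phi v.
Proof.
move=> iphi Zu Zv; rewrite {1}/eps innerM // (epsK phi u) (epsK phi v).
by rewrite central_mulACA // lldivK.
Qed.

Lemma eps_linv_central phi u : inner phi -> central (eps phi u) ->
  eps phi (linv u) = linv (eps phi u).
Proof.
by move=> iphi Zu; rewrite {1}/eps inner_linv // (epsK phi u) central_linvM // lldivK.
Qed.

Lemma central_central2 z : central z -> central2 z.
Proof. by move=> Zz phi iphi; rewrite eps_central //; exact: central1. Qed.

Lemma central2M u v : central2 u -> central2 v -> central2 (u ** v).
Proof.
move=> Zu Zv phi iphi; have [Zeu Zev] := (Zu _ iphi, Zv _ iphi).
by rewrite eps_mul_central //; exact: centralM.
Qed.

Lemma central2V u : central2 u -> central2 (linv u).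
Proof.
move=> Zu phi iphi; have Zeu := Zu _ iphi.
by rewrite eps_linv_central //; exact: centralV.
Qed.

Lemma central2_npow u m : central2 u -> central2 (npow u m).
Proof.
move=> Zu; elim: m => [|m IHm] /=; last exact: central2M.
exact/central_central2/central1.
Qed.

Lemma central2_zpow u n : central2 u -> central2 (zpow u n).
Proof.
by move=> Zu; case: n => m; rewrite /zpow; [|apply: central2V]; exact: central2_npow.
Qed.

Lemma inner_assoc phi x y z : inner phi ->
  phi (assoc x y z) = assoc (phi x) (phi y) (phi z).
Proof. by move=> iphi; rewrite /assoc innerV // !(innerM _ _ iphi). Qed.

(* Both sides are L_{x(yz)}^-1 L_x L_y L_z. *)
Lemma Lmap_cocycle x y z t :
  Lmap x (y ** z) (Lmap y z t) = Lmap (x ** y) (Lmap x y z) (Lmap x y t).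
Proof. by rewrite {1}/Lmap LmapE {1}/Lmap -(innerM _ _ (inner_Lmap x y)) !LmapE. Qed.

(* For u in Z_2 this is the associator (u,x,y) (see [assoc_zassoc]); going
   through the inner mapping L_{y,x} makes it additive in u. *)
Definition zassoc u x y : Zl := toZl (eps (Lmap y x) u).

Section Central2.
Variable u : Q.
Hypothesis Zu : central2 u.

Lemma Lmap_central2 x y : Lmap x y u = u ** zassoc u y x.
Proof. by rewrite toZlK; [exact: epsK | exact: Zu]. Qed.

Lemma mul_central2l x y : x ** (u ** y) = (u ** (x ** y)) ** zassoc u y x.
Proof. by rewrite (mulC u y) -LmapE Lmap_central2 central_mulA // (mulC (x ** y)). Qed.

Lemma assoc_central2 x y : (u ** x) ** y = (u ** (x ** y)) ** zassoc u x y.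
Proof. by rewrite [(u ** x) ** y]mulC mul_central2l (mulC y x). Qed.

Lemma assoc_zassoc x y : assoc u x y = zassoc u x y.
Proof. by rewrite /assoc assoc_central2 lldivK. Qed.

Lemma Lmap_central2l x y : Lmap u x y = y ** zval (- zassoc u x y).
Proof.
apply: (@lmulI _ (u ** x)); rewrite LmapE.
by rewrite (central_mulA (u ** x) y (zvalP _)) assoc_central2 mulzNK.
Qed.

Lemma Lmap_central2r x y : Lmap x u y = y ** zval (zassoc u y x - zassoc u x y).
Proof.
apply: (@lmulI _ (x ** u)); rewrite LmapE mul_central2l (mulC x u).
by rewrite (central_mulA (u ** x) y (zvalP _)) (assoc_central2 x y) mulzA addrC subrK.
Qed.

Lemma zassocM3 x y z : zassoc u x (y ** z) = zassoc u x y + zassoc u x z.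
Proof.
have := innerM y z (inner_Lmap u x).
rewrite !Lmap_central2l central_mulACA // -zvalD => /mulzI/eqP.
by rewrite -opprD eqr_opp => /eqP.
Qed.

Lemma zassocM2 x y z : zassoc u (y ** z) x = zassoc u y x + zassoc u z x.
Proof.
have := innerM y z (inner_Lmap x u).
rewrite !Lmap_central2r central_mulACA // -zvalD => /mulzI.
by rewrite zassocM3 opprD addrACA => /addIr.
Qed.

Lemma zassoc_one2 y : zassoc u (lone Q) y = 0.
Proof.
have := zassocM2 y (lone Q) (lone Q).
by rewrite lmul1r -{1}(addr0 (zassoc _ _ _)) => /addrI.
Qed.

Lemma zassoc_one3 x : zassoc u x (lone Q) = 0.
Proof.
have := zassocM3 x (lone Q) (lone Q).
by rewrite lmul1r -{1}(addr0 (zassoc _ _ _)) => /addrI.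
Qed.

Lemma zassocV2 x y : zassoc u (linv x) y = - zassoc u x y.
Proof. by apply/esym/eqP; rewrite eq_sym -subr_eq0 opprK -zassocM2 mulC linvP zassoc_one2. Qed.

Lemma zassocV3 x y : zassoc u x (linv y) = - zassoc u x y.
Proof. by apply/esym/eqP; rewrite eq_sym -subr_eq0 opprK -zassocM3 mulC linvP zassoc_one3. Qed.

Lemma zassocX2 x y m : zassoc u (npow x m) y = zassoc u x y *+ m.
Proof. by elim: m => [|m IHm] /=; rewrite ?zassoc_one2 // zassocM2 IHm mulrSr. Qed.

Lemma zassocX3 x y m : zassoc u x (npow y m) = zassoc u x y *+ m.
Proof. by elim: m => [|m IHm] /=; rewrite ?zassoc_one3 // zassocM3 IHm mulrSr. Qed.

Lemma zassoc_zpow2 x y n : zassoc u (zpow x n) y = zassoc u x y *~ n.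
Proof.
by case: n => m; rewrite /zpow ?zassocV2 zassocX2 // NegzE mulrNz.
Qed.

Lemma zassoc_xu x : zassoc u x u = 0.
Proof.
apply/esym/(@mulzI (u ** (u ** x))).
by rewrite -mul_central2l //; exact: lmul1r.
Qed.

End Central2.

Lemma zassoc_central z x y : central z -> zassoc z x y = 0.
Proof. by move=> Zz; rewrite /zassoc eps_central // toZl1. Qed.

Lemma zassocM1 u v x y : central2 u -> central2 v ->
  zassoc (u ** v) x y = zassoc u x y + zassoc v x y.
Proof.
move=> Zu Zv; have [Zeu Zev] := (Zu _ (inner_Lmap y x), Zv _ (inner_Lmap y x)).
by rewrite /zassoc eps_mul_central // toZlM.
Qed.

Lemma zassocMc u z x y : central2 u -> central z -> zassoc (u ** z) x y = zassoc u x y.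
Proof.
move=> Zu Zz; rewrite zassocM1 //; last exact: central_central2.
by rewrite (zassoc_central _ _ Zz) addr0.
Qed.

Lemma zassocV1 u x y : central2 u -> zassoc (linv u) x y = - zassoc u x y.
Proof.
move=> Zu; have Zeu := Zu _ (inner_Lmap y x).
by rewrite /zassoc eps_linv_central // toZlV.
Qed.

Lemma zassocX1 u m x y : central2 u -> zassoc (npow u m) x y = zassoc u x y *+ m.
Proof.
move=> Zu; elim: m => [|m IHm] /=; first exact/zassoc_central/central1.
by rewrite zassocM1 // ?IHm ?mulrSr //; exact: central2_npow.
Qed.

Lemma zassoc_zpow1 u n x y : central2 u -> zassoc (zpow u n) x y = zassoc u x y *~ n.
Proof.
move=> Zu; case: n => m; rewrite /zpow; first exact: zassocX1.
by rewrite zassocV1 ?zassocX1 ?NegzE ?mulrNz //; exact: central2_npow.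
Qed.

Lemma zassoc_inner phi u x y : inner phi -> central2 u ->
  zassoc u (phi x) (phi y) = zassoc u x y.
Proof.
move=> iphi Zu; have Zeu := Zu _ iphi.
have Zphiu : central2 (phi u) by rewrite (epsK phi u); exact/central2M/central_central2.
have := zvalP (zassoc u x y) iphi.
rewrite -(assoc_zassoc Zu) inner_assoc // (assoc_zassoc Zphiu) (epsK phi u) zassocMc // => e.
by apply: zval_inj; rewrite e assoc_zassoc.
Qed.

Lemma zassoc_Lmap u x y z : central2 u ->
  zassoc u (Lmap x y z) (x ** y) = zassoc u z (x ** y).
Proof.
move=> Zu; have := Lmap_cocycle x y z u.
rewrite (Lmap_central2 Zu y z) (Lmap_central2 Zu x y) !(innerM _ _ (inner_Lmap _ _)).
rewrite !(zvalP _ (inner_Lmap _ _)) !(Lmap_central2 Zu) !mulzA => /mulzI.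
rewrite [Lmap x y z]epsK !(zassocM2 Zu) (zassocM3 Zu z) => cocycle.
by apply/esym/(@addrI _ (zassoc u y x)); rewrite addrA cocycle addrC.
Qed.

Lemma central2_mulACA E e x y : central2 E -> central2 e ->
  (y ** E) ** (x ** e) = (y ** x) ** ((E ** e) **
    zval (zassoc e x y + zassoc E y (e ** x) - zassoc E e (y ** x))).
Proof.
move=> ZE Ze; rewrite (mulC y E) [x ** e]mulC (assoc_central2 ZE) (mul_central2l Ze).
rewrite central_mulA //.
rewrite -[E ** (e ** (y ** x))](mulzNK _ (zassoc E e (y ** x))) -(assoc_central2 ZE).
by rewrite !mulzA addrC (mulC (E ** e)) -central_mulA.
Qed.

Lemma central2_linvM E y : central2 E -> linv (y ** E) = linv y ** linv E.
Proof.
move=> ZE; apply/esym/linv_uniq.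
rewrite (central2_mulACA _ _ ZE (central2V ZE)) !linvP !lmul1l.
rewrite (zassocV1 _ _ ZE) (zassocV2 ZE) opprK (zassocM3 ZE) !(zassocV3 ZE).
by rewrite (zassoc_xu ZE) (zassoc_one3 ZE) oppr0 add0r addrN addr0.
Qed.

Lemma assoc_eps_at1 x y z : assoc x y z = eps_at (Lmap z y) (y ** z) x.
Proof.
rewrite /assoc /eps_at [x ** (y ** z)]mulC [(x ** y) ** z]mulC [x ** y]mulC.
by rewrite -LmapE [z ** y]mulC.
Qed.

Lemma assoc_eps_at2 x y z :
  assoc x y z = eps_at (Lmap z x \o Lmap_inv x z) (x ** z) (Lmap x z y).
Proof.
rewrite /assoc /eps_at /= Lmap_invK LmapE [y ** z]mulC [(x ** y) ** z]mulC.
by rewrite -[z ** (x ** y)]LmapE [z ** x]mulC.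
Qed.

Hypothesis Z3Q : forall x : Q, zcenter 3%N x.

Lemma central2_eps phi x : inner phi -> central2 (eps phi x).
Proof.
move=> [mphi phi1]; case: (Z3Q x mphi); first by rewrite phi1; exact: zcenter2_one.
by move=> z Zz phix; rewrite /eps phix lldivK; exact: zcenter2_central2.
Qed.

Section InnerMap.
Variable phi : Q -> Q.
Hypothesis iphi : inner phi.

Lemma zassoc_eps_self y : zassoc (eps phi y) (eps phi y) y = 0.
Proof.
have Ze := central2_eps y iphi.
have := zassoc_inner y y iphi Ze.
rewrite (epsK phi y) (zassocM2 Ze) !(zassocM3 Ze) !(zassoc_xu Ze) !addr0.
by rewrite -{2}[zassoc _ y y]addr0 => /addrI.
Qed.

Lemma eps_linv y : eps phi (linv y) = linv (eps phi y).
Proof.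
rewrite {1}/eps (inner_linv _ iphi) (epsK phi y).
by rewrite (central2_linvM _ (central2_eps y iphi)) lldivK.
Qed.

Lemma eps_atE s y : eps_at phi s y = eps phi y ** zassoc (eps phi y) y s.
Proof.
rewrite /eps_at (epsK phi y) (mulC y) (mul_central2l (central2_eps y iphi)).
by rewrite (mulC (eps phi y)) -central_mulA // lldivK.
Qed.

Variable v : Q.
Local Notation e := (eps phi v).
Local Notation w := (zassoc (eps phi v) v v).

Lemma eps_npow m : eps phi (npow v m) = npow e m ** zval (w *+ alpha_nat m).
Proof.
have Ze := central2_eps v iphi.
elim: m => [|m IHm] /=.
  by rewrite eps_central //; [exact/esym/lmul1r | exact: central1].
have ZE : central2 (npow e m ** zval (w *+ alpha_nat m)).
  exact/central2M/central_central2/zvalP/central2_npow.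
rewrite {1}/eps (innerM _ _ iphi) (epsK phi (npow v m)) (epsK phi v) IHm.
rewrite (central2_mulACA _ _ ZE Ze) lldivK (central_mulAC _ _ (zvalP _)) mulzA.
congr (_ ** zval _).
rewrite !(zassocMc _ _ (central2_npow m Ze) (zvalP _)) !zassocX1 //.
rewrite (zassocX3 Ze) (zassocM3 Ze) !(zassocX2 Ze) (zassoc_xu Ze).
rewrite -[npow v m ** v]/(npow v m.+1) (zassocX3 Ze) zassoc_eps_self.
by rewrite !mul0rn add0r subr0 mulnS !mulrnDr mulrnA.
Qed.

Lemma eps_zpow n : eps phi (zpow v n) = zpow e n ** zval (w *~ alpha n).
Proof.
case: n => m; rewrite /zpow ?eps_linv eps_npow; first by rewrite alpha_Posz -pmulrn.
by rewrite (central_linvM _ (zvalP _)) alpha_Negz mulrNz -pmulrn.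
Qed.

Lemma eps_at_zpow s n :
  eps_at phi s (zpow v n) = zpow e n ** zval (w *~ alpha n + zassoc e v s *~ (n * n)).
Proof.
have Ze := central2_eps v iphi.
rewrite eps_atE eps_zpow (zassocMc _ _ (central2_zpow n Ze) (zvalP _)).
by rewrite (zassoc_zpow1 _ _ _ Ze) (zassoc_zpow2 Ze) mulzA mulrzA.
Qed.

End InnerMap.

Lemma eps_at_zpow_assoc phi s v p q r n : inner phi ->
    zassoc (eps phi v) p p = zassoc (eps phi v) v v ->
    zassoc (eps phi v) p q + zassoc (eps phi v) p r = zassoc (eps phi v) v s ->
  let A := eps_at phi s v in
  eps_at phi s (zpow v n) = zpow A n ** zpow (assoc A p p) (alpha n)
    ** zpow (assoc A p q) (beta n) ** zpow (assoc A p r) (beta n).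
Proof.
move=> iphi epp epqr A; have Ze := central2_eps v iphi.
have eA : A = eps phi v ** zassoc (eps phi v) v s by exact: eps_atE.
have ZA : central2 A by rewrite eA; exact/central2M/central_central2.
rewrite !(assoc_zassoc ZA) eA !(zassocMc _ _ Ze (zvalP _)) epp !zpow_zval zpow_mulz.
rewrite eps_at_zpow // !mulzA; congr (_ ** zval _).
rewrite -mulrzDl epqr addrCA -mulrzDr; congr (_ + _ *~ _).
by rewrite /beta; ring.
Qed.

Lemma assoc_zpowl (a b c : Q) n : let A := assoc a b c in
  assoc (zpow a n) b c = zpow A n ** zpow (assoc A a a) (alpha n)
    ** zpow (assoc A a b) (beta n) ** zpow (assoc A a c) (beta n).
Proof.
rewrite /= [assoc (zpow a n) b c]assoc_eps_at1 [assoc a b c]assoc_eps_at1.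
apply: eps_at_zpow_assoc => //; rewrite zassocM3 //; exact: central2_eps.
Qed.

Lemma assoc_zpowm (a b c : Q) n : let A := assoc a b c in
  assoc a (zpow b n) c = zpow A n ** zpow (assoc A b b) (alpha n)
    ** zpow (assoc A b a) (beta n) ** zpow (assoc A b c) (beta n).
Proof.
have Ze := central2_eps (Lmap a c b) (inner_Lmap_conj a c).
rewrite /= [assoc a (zpow b n) c]assoc_eps_at2 [assoc a b c]assoc_eps_at2.
rewrite (inner_zpow _ _ (inner_Lmap a c)); apply: eps_at_zpow_assoc.
- exact: inner_Lmap_conj.
- by rewrite zassoc_inner.
- by rewrite zassoc_Lmap // zassocM3.
Qed.

Lemma assoc_zpowr (a b c : Q) n : let A := assoc a b c in
  assoc a b (zpow c n) = zpow A n ** zpow (assoc A c c) (alpha n)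
    ** zpow (assoc A c a) (beta n) ** zpow (assoc A c b) (beta n).
Proof.
have Ze := central2_eps (Lmap a b c) (inner_Lmap_inv a b).
rewrite /= [assoc a b (zpow c n)]assoc_eps_at3 [assoc a b c]assoc_eps_at3.
rewrite (inner_zpow _ _ (inner_Lmap a b)); apply: eps_at_zpow_assoc.
- exact: inner_Lmap_inv.
- by rewrite zassoc_inner.
- by rewrite zassoc_Lmap // zassocM3.
Qed.

End CommutativeAutomorphic.

Theorem lemma3p1 (Q : loop) :
  commutative_loop Q -> automorphic Q -> nilpotency_class Q 3 ->
  forall (a b c : Q) (n : int),
    let A := assoc a b c in
    [/\ assoc (zpow a n) b c =
          lmul (lmul (lmul (zpow A n) (zpow (assoc A a a) (alpha n)))
                     (zpow (assoc A a b) (beta n)))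
               (zpow (assoc A a c) (beta n)),
        assoc a (zpow b n) c =
          lmul (lmul (lmul (zpow A n) (zpow (assoc A b b) (alpha n)))
                     (zpow (assoc A b a) (beta n)))
               (zpow (assoc A b c) (beta n))
      & assoc a b (zpow c n) =
          lmul (lmul (lmul (zpow A n) (zpow (assoc A c c) (alpha n)))
                     (zpow (assoc A c a) (beta n)))
               (zpow (assoc A c b) (beta n))].
Proof.
move=> mulC autQ [_ Z3Q] a b c n A.
by split; [exact: assoc_zpowl | exact: assoc_zpowm | exact: assoc_zpowr].
Qed.
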